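(* Let $f$ be an $n$-variable Boolean function. Then $\min({FAI}(f),{FAI}(1+f))\le 2\,{AI}(f)$.
   Context: An $n$-variable Boolean function is a map $\mathbb{F}_2^n\to\mathbb{F}_2$, with algebraic degree $\deg$ the degree of its algebraic normal form. ${LDA}(h)$ is the minimum algebraic degree of a nonzero $g$ with $h\cdot g=0$; ${AI}(f)=\min({LDA}(f),{LDA}(1+f))$. ${AN}^c(f)$ is the set of $g$ with $f\cdot g\neq0$, and ${FAI}(f)$ is the minimum of $\deg(g)+\deg(f\cdot g)$ over $g\in{AN}^c(f)$, $g\neq 1$. *)

From mathcomp Require Import all_boot.
Set Implicit Arguments. Unset Strict Implicit. Unset Printing Implicit Defensive.

(* A point of F_2^n is identified with its support {i | x_i = 1} : {set 'I_n}.
   An n-variable Boolean function is a finite function on these points. *)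
Definition bfun (n : nat) := {ffun {set 'I_n} -> bool}.

Section BoolFun.
Variable n : nat.

(* ANF coefficient of the monomial prod_{i in S} x_i (Moebius transform over F_2). *)
Definition anf_coef (f : bfun n) (S : {set 'I_n}) : bool :=
  \big[addb/false]_(T : {set 'I_n} | T \subset S) f T.

(* algebraic degree: largest monomial of the ANF (0 for the zero function) *)
Definition deg (f : bfun n) : nat := \max_(S : {set 'I_n} | anf_coef f S) #|S|.

Definition bzero : bfun n := [ffun _ => false].
Definition bone : bfun n := [ffun _ => true].
Definition bmul (f g : bfun n) : bfun n := [ffun x => f x && g x].
Definition bcompl (f : bfun n) : bfun n := [ffun x => ~~ f x].

(* LDA(h): minimum degree of a nonzero annihilator g of h (h * g = 0).
   Convention n+1 when no such g exists (only for h = 1). *)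
Definition LDA (h : bfun n) : nat :=
  \big[minn/n.+1]_(g : bfun n | (g != bzero) && (bmul h g == bzero)) deg g.

Definition AI (f : bfun n) : nat := minn (LDA f) (LDA (bcompl f)).

(* FAI(f) = min { deg g + deg (f g) : f g <> 0, g <> 1 }.
   Convention (2n)+1 on the empty set (only when f is constant). *)
Definition FAI (f : bfun n) : nat :=
  \big[minn/(2 * n).+1]_(g : bfun n | (bmul f g != bzero) && (g != bone))
     (deg g + deg (bmul f g)).
End BoolFun.

From mathcomp Require Import all_boot.
Set Implicit Arguments. Unset Strict Implicit.

(* Any nonzero annihilator g of f satisfies (1 + f) g = g, and g <> 1 because f <> 0;
   so g is admissible in FAI(1 + f) with cost deg g + deg g.  Taking g of degree LDA(f)
   gives FAI(1 + f) <= 2 LDA(f), and symmetrically FAI(f) <= 2 LDA(1 + f). *)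

Section BigMin.
Variables (I : finType) (P : pred I) (F : I -> nat) (idx : nat).

Lemma bigmin_leq i0 : P i0 -> \big[minn/idx]_(i | P i) F i <= F i0.
Proof.
move=> Pi0; have : i0 \in index_enum I by rewrite mem_index_enum.
elim: (index_enum I) => // j r IHr; rewrite in_cons big_cons => /predU1P [<-|r_i0].
  by rewrite Pi0 geq_minl.
by case: (P j); rewrite ?geq_min IHr ?orbT.
Qed.

Lemma bigmin_leq_idx : \big[minn/idx]_(i | P i) F i <= idx.
Proof.
by elim/big_rec: _ => // i x _ le_x; rewrite geq_min le_x orbT.
Qed.

End BigMin.

Section Annihilators.
Variable n : nat.
Implicit Types f g h : bfun n.

Lemma bcomplK f : bcompl (bcompl f) = f.
Proof. by apply/ffunP => x; rewrite !ffunE negbK. Qed.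

Lemma bcompl_neq0 f : f != bone n -> bcompl f != bzero n.
Proof.
apply: contra => /eqP f'0; apply/eqP/ffunP => x.
by move/ffunP/(_ x): f'0; rewrite !ffunE; case: (f x).
Qed.

Lemma bmul_bcompl_ann h g : bmul h g = bzero n -> bmul (bcompl h) g = g.
Proof.
move/ffunP=> hg; apply/ffunP => x.
by move: (hg x); rewrite !ffunE; case: (h x); case: (g x).
Qed.

Lemma bmulf1 f : bmul f (bone n) = f.
Proof. by apply/ffunP => x; rewrite !ffunE andbT. Qed.

Lemma ann_neq_bone h g : h != bzero n -> bmul h g = bzero n -> g != bone n.
Proof.
move=> hnz hg; apply: contra hnz => /eqP g1.
by rewrite -[h]bmulf1 -g1 hg.
Qed.

Lemma FAI_le_deg_add f g :
  bmul f g != bzero n -> g != bone n -> FAI f <= deg g + deg (bmul f g).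
Proof. by move=> fg g1; apply: bigmin_leq; rewrite fg g1. Qed.

Lemma FAI_bcompl_le_LDA h : h != bzero n -> FAI (bcompl h) <= 2 * LDA h.
Proof.
move=> hnz; rewrite /LDA.
elim/big_ind: _ => [|x y le_x le_y|g /andP [gnz /eqP hg]].
- (* no annihilator: LDA h is its default n + 1, and FAI never exceeds its default 2n + 1 *)
  rewrite mulnS add2n ltnW // ltnS; exact: bigmin_leq_idx.
- by rewrite /minn; case: ltnP.
- have h'g := bmul_bcompl_ann hg.
  rewrite mul2n -addnn -{2}h'g.
  by apply: FAI_le_deg_add; rewrite ?h'g // (ann_neq_bone hnz hg).
Qed.

End Annihilators.

Theorem corollary1 (n : nat) (f : bfun n)
  (f_nz : f != bzero n) (f_n1 : f != bone n) :
  minn (FAI f) (FAI (bcompl f)) <= 2 * AI f.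
Proof.
have le_f' : FAI (bcompl f) <= 2 * LDA f by exact: FAI_bcompl_le_LDA.
have le_f : FAI f <= 2 * LDA (bcompl f).
  by rewrite -{1}[f]bcomplK; apply/FAI_bcompl_le_LDA/bcompl_neq0.
by rewrite /AI minnMr leq_min !geq_min le_f le_f' orbT.
Qed.
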